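(* For every $n$, the $(\wedge,\to)$-homomorphism $h:F_{\wedge,\to}(n)\to\mathcal U(U(n)_{\wedge,\to})$ extending $p_i\mapsto\{x\in U(n)_{\wedge,\to}: x\models p_i\}$ is injective. In particular, $F_{\wedge,\to}(n)$ is finite, and therefore the variety of implicative meet-semilattices is locally finite.
   Context: An implicative meet-semilattice is $(A,\wedge,\to)$ with $(A,\wedge)$ a meet-semilattice and $a\wedge b\le c\iff a\le b\to c$. $F_{\wedge,\to}(n)$ is the free implicative meet-semilattice on $p_1,\dots,p_n$, equivalently the $(\wedge,\to)$-formulas in $p_1,\dots,p_n$ modulo IPC-equivalence. $\mathcal U(X)$ is the Heyting algebra of up-sets of a poset $X$. Models are posets with an order-preserving colouring $c:M\to\{0,1\}^n$ and intuitionistic Kripke semantics ($x\models p_i$ iff $c(x)_i=1$). A point $x$ is separated if for some variable $q$, $x\not\models q$ but all $y>x$ satisfy $q$; $M^s$ denotes the separated points with restricted order and colouring. $U(n)$ is the $n$-universal model: the generated submodel of the canonical model of IPC on $p_1,\dots,p_n$ (prime filters of the free Heyting algebra ordered by inclusion, $c(x)_i=1$ iff $p_i\in x$) consisting of points with finite up-set. For every model of finite depth there is a unique p-morphism (order- and colour-preserving map with the back condition) into $U(n)$; $U(n)^s$ has finite depth, and $U(n)_{\wedge,\to}$ denotes the image of the unique p-morphism $U(n)^s\to U(n)$, a generated submodel of $U(n)$. *)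

From Stdlib Require Import List Arith.
Import ListNotations.

(** * Intuitionistic propositional formulas; variable p_(i+1) is [Var i]. *)
Inductive form : Type :=
| Var (i : nat)
| Bot
| And (a b : form)
| Or (a b : form)
| Imp (a b : form).

Definition Top : form := Imp Bot Bot.

Fixpoint in_lang (n : nat) (a : form) : Prop :=
  match a with
  | Var i => i < n
  | Bot => True
  | And a b | Or a b | Imp a b => in_lang n a /\ in_lang n b
  end.

Inductive nd : list form -> form -> Prop :=
| nd_ax G a : In a G -> nd G a
| nd_botE G a : nd G Bot -> nd G a
| nd_andI G a b : nd G a -> nd G b -> nd G (And a b)
| nd_andE1 G a b : nd G (And a b) -> nd G a
| nd_andE2 G a b : nd G (And a b) -> nd G b
| nd_orI1 G a b : nd G a -> nd G (Or a b)
| nd_orI2 G a b : nd G b -> nd G (Or a b)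
| nd_orE G a b c : nd G (Or a b) -> nd (a :: G) c -> nd (b :: G) c -> nd G c
| nd_impI G a b : nd (a :: G) b -> nd G (Imp a b)
| nd_impE G a b : nd G (Imp a b) -> nd G a -> nd G b.

Definition ipc_equiv (a b : form) : Prop := nd [] (Imp a b) /\ nd [] (Imp b a).

Inductive imf : Type :=
| IVar (i : nat)
| IAnd (a b : imf)
| IImp (a b : imf).

Fixpoint emb (a : imf) : form :=
  match a with
  | IVar i => Var i
  | IAnd a b => And (emb a) (emb b)
  | IImp a b => Imp (emb a) (emb b)
  end.

Fixpoint imf_lang (n : nat) (a : imf) : Prop :=
  match a with
  | IVar i => i < n
  | IAnd a b | IImp a b => imf_lang n a /\ imf_lang n b
  end.

(** A point is a prime filter of the free Heyting algebra on n generators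
    (the Lindenbaum algebra of n-formulas), represented as the set of
    n-formulas whose classes belong to it. Points are ordered by inclusion;
    equality of points is extensional equality of sets. *)
Definition fset := form -> Prop.
Definition subset (x y : fset) : Prop := forall a, x a -> y a.

Definition prime_filter (n : nat) (x : fset) : Prop :=
  (forall a, x a -> in_lang n a) /\
  x Top /\
  (forall a b, x a -> in_lang n b -> nd [] (Imp a b) -> x b) /\
  (forall a b, x a -> x b -> x (And a b)) /\
  ~ x Bot /\
  (forall a b, x (Or a b) -> x a \/ x b).

Definition finite_upset (n : nat) (x : fset) : Prop :=
  exists l : list fset, forall y, prime_filter n y -> subset x y ->
    exists z, In z l /\ subset y z /\ subset z y.

(** points of the n-universal model U(n); colouring: x |= p_(i+1) iff Var i \in x *)
Definition Upt (n : nat) (x : fset) : Prop := prime_filter n x /\ finite_upset n x.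

Definition separated (n : nat) (x : fset) : Prop :=
  Upt n x /\
  exists i, i < n /\ ~ x (Var i) /\
    forall y, Upt n y -> subset x y -> ~ subset y x -> y (Var i).

Definition pmorph (n : nat) (f : fset -> fset) : Prop :=
  (forall x, separated n x -> Upt n (f x)) /\
  (forall x y, separated n x -> separated n y -> subset x y -> subset (f x) (f y)) /\
  (forall x i, separated n x -> i < n -> (f x (Var i) <-> x (Var i))) /\
  (forall x z, separated n x -> Upt n z -> subset (f x) z ->
     exists y, separated n y /\ subset x y /\ subset (f y) z /\ subset z (f y)).

(** U(n)_{/\,->}: the image of the (unique) p-morphism U(n)^s -> U(n) *)
Definition Uim (n : nat) (z : fset) : Prop :=
  Upt n z /\ exists f, pmorph n f /\
    exists y, separated n y /\ subset (f y) z /\ subset z (f y).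

Fixpoint hsem (n : nat) (a : imf) (x : fset) : Prop :=
  match a with
  | IVar i => x (Var i)
  | IAnd a b => hsem n a x /\ hsem n b x
  | IImp a b => forall y, Uim n y -> subset x y -> hsem n a y -> hsem n b y
  end.

Definition h (n : nat) (a : imf) : fset -> Prop := fun x => Uim n x /\ hsem n a x.

Record ImpSL : Type := {
  car : Type;
  meet : car -> car -> car;
  imp : car -> car -> car;
  meetA : forall a b c, meet a (meet b c) = meet (meet a b) c;
  meetC : forall a b, meet a b = meet b a;
  meetI : forall a, meet a a = a;
  (* a /\ b <= c  iff  a <= b -> c, where x <= y :<-> meet x y = x *)
  resid : forall a b c, meet (meet a b) c = meet a b <-> meet a (imp b c) = a
}.

Fixpoint eval (A : ImpSL) (g : nat -> car A) (a : imf) : car A :=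
  match a with
  | IVar i => g i
  | IAnd a b => meet A (eval A g a) (eval A g b)
  | IImp a b => imp A (eval A g a) (eval A g b)
  end.

(* If [a] does not prove [b], a maximal closed theory containing [a] but not [b], in the finite
   model of closed theories over the subformulas of [a] and [b], is a separated point. Taking
   theories maps separated points of this finite model to separated points of [U(n)], and the
   p-morphism sending a point to its theory then lands in [U(n)_{/\,->}], where truth of an
   (/\,->)-formula agrees with membership (a Lindenbaum argument, as [U(n)_{/\,->}] is an
   up-set); this refutes [a -> b] under [h]. In a finite model the number of refuted variables
   drops strictly above a separated point, so its separated part has height at most [n]:
   formulas are therefore determined by their values on the finitely many coloured trees of
   height at most [n + 1]. Finally IPC is sound for implicative meet-semilattices, through
   their models of filters, which gives local finiteness. *)

From Stdlib Require Import List Lia Wf_nat Classical ClassicalEpsilon Cantor.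
Import ListNotations.

Lemma nd_weaken G a : nd G a -> forall G', incl G G' -> nd G' a.
Proof.
  induction 1; intros G' HG.
  - apply nd_ax; auto.
  - apply nd_botE; auto.
  - apply nd_andI; auto.
  - eapply nd_andE1; eauto.
  - eapply nd_andE2; eauto.
  - apply nd_orI1; auto.
  - apply nd_orI2; auto.
  - eapply nd_orE; [eauto | apply IHnd2 | apply IHnd3]; intros x [<-|Hx]; simpl; auto.
  - apply nd_impI, IHnd; intros x [<-|Hx]; simpl; auto.
  - eapply nd_impE; eauto.
Qed.

Lemma nd_cut H b : nd H b -> forall G, (forall c, In c H -> nd G c) -> nd G b.
Proof.
  induction 1; intros G' HG.
  - auto.
  - apply nd_botE; auto.
  - apply nd_andI; auto.
  - eapply nd_andE1; eauto.
  - eapply nd_andE2; eauto.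
  - apply nd_orI1; auto.
  - apply nd_orI2; auto.
  - eapply nd_orE; [eauto | apply IHnd2 | apply IHnd3]; intros x [<-|Hx];
      solve [apply nd_ax; simpl; auto | eapply nd_weaken; [apply HG; auto | auto with datatypes]].
  - apply nd_impI, IHnd; intros x [<-|Hx];
      solve [apply nd_ax; simpl; auto | eapply nd_weaken; [apply HG; auto | auto with datatypes]].
  - eapply nd_impE; eauto.
Qed.

Lemma nd_top G : nd G Top.
Proof. apply nd_impI, nd_ax; simpl; auto. Qed.

Fixpoint conj_list (l : list form) : form :=
  match l with [] => Top | a :: l => And a (conj_list l) end.
Fixpoint disj_list (l : list form) : form :=
  match l with [] => Bot | a :: l => Or a (disj_list l) end.

Lemma in_lang_conj_list n l : (forall a, In a l -> in_lang n a) -> in_lang n (conj_list l).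
Proof. induction l; simpl; auto. Qed.

Lemma in_lang_disj_list n l : (forall a, In a l -> in_lang n a) -> in_lang n (disj_list l).
Proof. induction l; simpl; auto. Qed.

Lemma nd_conj_list_elim G g H : In g G -> nd H (conj_list G) -> nd H g.
Proof.
  revert H; induction G as [|a G IH]; simpl; intros H Hg Hn; [destruct Hg|].
  destruct Hg as [<-|Hg].
  - eapply nd_andE1; eauto.
  - eapply IH; eauto. eapply nd_andE2; eauto.
Qed.

Lemma nd_imp_conj_list G a : nd G a -> nd [] (Imp (conj_list G) a).
Proof.
  intro H. apply nd_impI. eapply nd_cut; eauto.
  intros c Hc. eapply nd_conj_list_elim; eauto. apply nd_ax; simpl; auto.
Qed.

(** * Kripke semantics *)

(* The worlds are the [w : world] with [is_world w]; this lets the models below live on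
   ambient types such as [fset] or [list imf]. *)
Record kripke : Type := Kripke {
  world : Type;
  is_world : world -> Prop;
  kle : world -> world -> Prop;
  val : world -> nat -> Prop;
  kle_refl : forall w, kle w w;
  kle_trans : forall u v w, kle u v -> kle v w -> kle u w;
  val_mono : forall u v i, kle u v -> val u i -> val v i }.

#[global] Hint Resolve kle_refl : core.

Fixpoint forces (K : kripke) (w : world K) (a : form) : Prop :=
  match a with
  | Var i => val K w i
  | Bot => False
  | And a b => forces K w a /\ forces K w b
  | Or a b => forces K w a \/ forces K w b
  | Imp a b => forall w', is_world K w' -> kle K w w' -> forces K w' a -> forces K w' b
  end.

Section Kripke.
Variable K : kripke.
Notation forces := (forces K).

Lemma forces_mono a u v : kle K u v -> forces u a -> forces v a.
Proof.
  revert u v; induction a; simpl; intros u v Huv H; try tauto.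
  - eapply val_mono; eauto.
  - destruct H; split; eauto.
  - destruct H; [left | right]; eauto.
  - intros w' Pw Hvw. apply H; auto. eapply kle_trans; eauto.
Qed.

Lemma nd_sound G a : nd G a ->
  forall w, is_world K w -> (forall g, In g G -> forces w g) -> forces w a.
Proof.
  induction 1; intros w Pw HG; simpl in *.
  - auto.
  - destruct (IHnd w Pw HG).
  - split; auto.
  - apply (IHnd w Pw HG).
  - apply (IHnd w Pw HG).
  - left; auto.
  - right; auto.
  - destruct (IHnd1 w Pw HG) as [Ha|Hb].
    + apply IHnd2; auto; intros g [<-|Hg]; auto.
    + apply IHnd3; auto; intros g [<-|Hg]; auto.
  - intros w' Pw' Hww' Ha; apply IHnd; auto; intros g [<-|Hg]; auto.
    eapply forces_mono; eauto.
  - eapply (IHnd1 w Pw HG); eauto.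
Qed.

Lemma forces_nd_imp a b : nd [] (Imp a b) -> forall w, is_world K w -> forces w a -> forces w b.
Proof.
  intros H w Pw Ha. refine (nd_sound _ _ H w Pw _ w Pw (kle_refl K w) Ha). intros g [].
Qed.

Lemma forces_conj_list w l : forces w (conj_list l) <-> forall a, In a l -> forces w a.
Proof.
  induction l as [|b l IH]; simpl.
  - split; [intros _ a [] | intros _ w' _ _ H; exact H].
  - rewrite IH. split; [intros [H1 H2] c [<-|Hc]; auto | intros H; split; auto].
Qed.

Lemma forces_disj_list w l : forces w (disj_list l) <-> exists a, In a l /\ forces w a.
Proof.
  induction l as [|b l IH]; simpl.
  - split; [tauto | intros [a [[] _]]].
  - rewrite IH. split; [intros [H|[c [? ?]]]; eauto | intros [c [[<-|Hc] Hs]]; eauto].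
Qed.

End Kripke.
Section PrimeFilter.
Variable n : nat.
Variable v : fset.
Hypothesis Hv : prime_filter n v.

Lemma pf_lang a : v a -> in_lang n a.
Proof. apply Hv. Qed.
Lemma pf_closed a b : v a -> in_lang n b -> nd [] (Imp a b) -> v b.
Proof. apply Hv. Qed.
Lemma pf_top : v Top.
Proof. apply Hv. Qed.
Lemma pf_andI a b : v a -> v b -> v (And a b).
Proof. apply Hv. Qed.
Lemma pf_nobot : ~ v Bot.
Proof. apply Hv. Qed.
Lemma pf_or a b : v (Or a b) -> v a \/ v b.
Proof. apply Hv. Qed.

Lemma pf_and1 a b : v (And a b) -> v a.
Proof.
  intro H. destruct (pf_lang _ H). eapply pf_closed; eauto.
  apply nd_impI. eapply nd_andE1, nd_ax; simpl; eauto.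
Qed.

Lemma pf_and2 a b : v (And a b) -> v b.
Proof.
  intro H. destruct (pf_lang _ H). eapply pf_closed; eauto.
  apply nd_impI. eapply nd_andE2, nd_ax; simpl; eauto.
Qed.

Lemma pf_mp a b : v (Imp a b) -> v a -> v b.
Proof.
  intros H1 H2. destruct (pf_lang _ H1).
  eapply pf_closed; [apply (pf_andI _ _ H1 H2) | auto |].
  apply nd_impI. eapply nd_impE; [eapply nd_andE1 | eapply nd_andE2]; apply nd_ax; simpl; eauto.
Qed.

Lemma pf_conj_list l : (forall a, In a l -> v a) -> v (conj_list l).
Proof. induction l; simpl; intros. apply pf_top. apply pf_andI; auto. Qed.

Lemma pf_disj_list l : v (disj_list l) -> exists b, In b l /\ v b.
Proof.
  induction l as [|a l IH]; simpl; intros H; [destruct (pf_nobot H)|].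
  destruct (pf_or _ _ H) as [H1|H1]; [eauto|]. destruct (IH H1) as [b [? ?]]; eauto.
Qed.

End PrimeFilter.

Lemma prime_filter_ext n y z : prime_filter n y -> subset y z -> subset z y -> prime_filter n z.
Proof.
  intros [H1 [H2 [H3 [H4 [H5 H6]]]]] Hyz Hzy.
  repeat split; eauto. intros a b Ha; destruct (H6 a b); auto.
Qed.

Lemma subset_refl x : subset x x.
Proof. intros a H; auto. Qed.

Lemma subset_trans x y z : subset x y -> subset y z -> subset x z.
Proof. intros H1 H2 a H; auto. Qed.

(** * The theory map into the canonical model *)
Section Theory.
Variable K : kripke.
Variable n : nat.
Notation forces := (forces K).

Definition theory (w : world K) : fset := fun a => in_lang n a /\ forces w a.

Lemma theory_prime_filter w : is_world K w -> prime_filter n (theory w).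
Proof.
  intros Pw. unfold theory. split; [|split; [|split; [|split; [|split]]]].
  - tauto.
  - split; [simpl; auto | intros w' _ _ []].
  - intros a b [La Sa] Lb Hab. split; auto. eapply forces_nd_imp; eauto.
  - intros a b [La Sa] [Lb Sb]; split; simpl; auto.
  - intros [_ []].
  - intros a b [[La Lb] [Sa|Sb]]; auto.
Qed.

Lemma theory_mono u w : kle K u w -> subset (theory u) (theory w).
Proof. intros H a [La Sa]; split; auto. eapply forces_mono; eauto. Qed.

Definition finite_cover (x : world K) (l : list (world K)) : Prop :=
  forall y, is_world K y -> kle K x y ->
    exists z, In z l /\ is_world K z /\ kle K x z /\ kle K y z /\ kle K z y.

Lemma theory_neq_witness v z : prime_filter n v ->
  ~ (subset (theory z) v /\ subset v (theory z)) ->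
  (exists a, v a /\ ~ forces z a) \/ (exists b, in_lang n b /\ ~ v b /\ forces z b).
Proof.
  intros Hv Hn. destruct (classic (subset v (theory z))) as [Hs|Hs].
  - right. apply NNPP; intro Hc; apply Hn; split; auto.
    intros b [Lb Sb]. apply NNPP; intro; apply Hc; eauto.
  - left. apply NNPP; intro Hc; apply Hs. intros a Ha. split; [eapply pf_lang; eauto|].
    apply NNPP; intro; apply Hc; eauto.
Qed.

(* Finitely many worlds are told apart from [v] by one conjunction and one disjunction. *)
Lemma separating_lists (Q : world K -> Prop) v l : prime_filter n v ->
  (forall z, In z l -> Q z -> ~ (subset (theory z) v /\ subset v (theory z))) ->
  exists As Bs, (forall a, In a As -> v a) /\ (forall b, In b Bs -> in_lang n b /\ ~ v b) /\
    forall z, In z l -> Q z ->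
      (exists a, In a As /\ ~ forces z a) \/ (exists b, In b Bs /\ forces z b).
Proof.
  intros Hv. induction l as [|z l IH]; intros Hl.
  - exists [], []; simpl; tauto.
  - destruct IH as [As [Bs [HA [HB Hsep]]]]; [intros; apply Hl; simpl; auto|].
    destruct (classic (Q z)) as [Qz|Qz].
    + destruct (theory_neq_witness v z Hv (Hl z (or_introl eq_refl) Qz))
        as [[a [Va Na]] | [b [Lb [Nb Sb]]]].
      * exists (a :: As), Bs. split; [intros c [<-|Hc]; auto|]. split; auto.
        intros z' [<-|Hz'] Qz'; [left; exists a; simpl; auto|].
        destruct (Hsep z' Hz' Qz') as [[a' [? ?]]|?]; [left; exists a'; simpl|]; auto.
      * exists As, (b :: Bs). split; auto. split; [intros c [<-|Hc]; auto|].
        intros z' [<-|Hz'] Qz'; [right; exists b; simpl; auto|].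
        destruct (Hsep z' Hz' Qz') as [?|[b' [? ?]]]; [|right; exists b'; simpl]; auto.
    + exists As, Bs. split; auto. split; auto.
      intros z' [<-|Hz'] Qz'; [contradiction | auto].
Qed.

(* Otherwise [conj_list As -> disj_list Bs] holds at [x], hence lies in [v], although [v]
   contains every formula of [As] and none of [Bs]. *)
Lemma theory_back x l : is_world K x -> finite_cover x l ->
  forall v, prime_filter n v -> subset (theory x) v ->
    exists y, In y l /\ is_world K y /\ kle K x y /\ subset (theory y) v /\ subset v (theory y).
Proof.
  intros Px Hc v Hv Hxv. apply NNPP; intro H.
  destruct (separating_lists (fun z => is_world K z /\ kle K x z) v l Hv)
    as [As [Bs [HA [HB Hsep]]]].
  { intros z Hz [Pz Hxz] Hzv. apply H. exists z; tauto. }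
  assert (Hi : theory x (Imp (conj_list As) (disj_list Bs))).
  { split.
    - split; [apply in_lang_conj_list | apply in_lang_disj_list]; intros;
        [eapply pf_lang; eauto | apply HB; auto].
    - intros y Py Hxy Sy.
      destruct (Hc y Py Hxy) as [z [Hz [Pz [Hxz [Hyz Hzy]]]]].
      apply (forces_mono K _ z); auto.
      destruct (Hsep z Hz (conj Pz Hxz)) as [[a [Ha Na]] | [b [Hb Sb]]].
      + exfalso; apply Na. apply (proj1 (forces_conj_list K z As)); auto.
        eapply forces_mono; eauto.
      + apply forces_disj_list; eauto. }
  apply Hxv in Hi.
  destruct (pf_disj_list _ _ Hv _ (pf_mp _ _ Hv _ _ Hi (pf_conj_list _ _ Hv _ HA)))
    as [b [Hb Vb]].
  apply (HB b); auto.
Qed.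

Lemma theory_finite_upset x l : is_world K x -> finite_cover x l -> finite_upset n (theory x).
Proof.
  intros Px Hc. exists (map theory l). intros y Hy Hxy.
  destruct (theory_back x l Px Hc y Hy Hxy) as [z [Hz [_ [_ [H1 H2]]]]].
  exists (theory z); split; auto. apply in_map; auto.
Qed.

End Theory.
Fixpoint form_code (a : form) : nat :=
  match a with
  | Var i => to_nat (0, i)
  | Bot => to_nat (1, 0)
  | And a b => to_nat (2, to_nat (form_code a, form_code b))
  | Or a b => to_nat (3, to_nat (form_code a, form_code b))
  | Imp a b => to_nat (4, to_nat (form_code a, form_code b))
  end.

Lemma to_nat_inj x y x' y' : to_nat (x, y) = to_nat (x', y') -> x = x' /\ y = y'.
Proof. intro H. apply (f_equal of_nat) in H. rewrite !cancel_of_to in H. now inversion H. Qed.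

Lemma form_code_inj a b : form_code a = form_code b -> a = b.
Proof.
  revert b; induction a; destruct b; intro H; cbn [form_code] in H;
    destruct (to_nat_inj _ _ _ _ H) as [Hk Hc]; try discriminate; [now subst | reflexivity | ..];
    destruct (to_nat_inj _ _ _ _ Hc); f_equal; auto.
Qed.

Definition form_of_code (k : nat) : option form :=
  match excluded_middle_informative (exists a, form_code a = k) with
  | left H => Some (proj1_sig (constructive_indefinite_description _ H))
  | right _ => None
  end.

Lemma form_of_codeK a : form_of_code (form_code a) = Some a.
Proof.
  unfold form_of_code. destruct excluded_middle_informative as [H|H]; [|exfalso; eauto].
  destruct constructive_indefinite_description as [b Hb]; simpl.
  f_equal; apply form_code_inj; auto.
Qed.

(** * Lindenbaum's lemma *)

Definition derives (G : fset) (a : form) : Prop :=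
  exists l, (forall g, In g l -> G g) /\ nd l a.

Definition extend (G : fset) (a : form) : fset := fun x => x = a \/ G x.

Lemma derives_ax G a : G a -> derives G a.
Proof. intro; exists [a]; split; [intros g [<-|[]]; auto | apply nd_ax; simpl; auto]. Qed.

Lemma derives_mono G H a : (forall x, G x -> H x) -> derives G a -> derives H a.
Proof. intros HGH [l [Hl Hn]]; exists l; auto. Qed.

Lemma derives_cut G As c : (forall a, In a As -> derives G a) -> nd As c -> derives G c.
Proof.
  intros H Hn.
  assert (exists l, (forall g, In g l -> G g) /\ forall a, In a As -> nd l a) as [l [Hl Hl']].
  { clear Hn. induction As as [|a As IH].
    - exists []; simpl; split; intros ? [].
    - destruct IH as [l [H1 H2]]; [intros; apply H; simpl; auto|].
      destruct (H a (or_introl eq_refl)) as [l' [H3 H4]].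
      exists (l ++ l'); split.
      + intros g Hg; apply in_app_or in Hg; destruct Hg; auto.
      + intros b [<-|Hb]; eapply nd_weaken; eauto with datatypes. }
  exists l; split; auto. eapply nd_cut; eauto.
Qed.

Lemma derives_extend G a b : derives (extend G a) b <-> derives G (Imp a b).
Proof.
  split.
  - intros [l [Hl Hn]].
    assert (exists l', (forall g, In g l' -> G g) /\ incl l (a :: l')) as [l' [H1 H2]].
    { clear Hn. induction l as [|x l IH].
      - exists []; split; [intros ? [] | intros ? []].
      - destruct IH as [l' [H1 H2]]; [intros; apply Hl; simpl; auto|].
        destruct (Hl x (or_introl eq_refl)) as [->|Hx].
        + exists l'; split; auto. intros g [<-|Hg]; [left; auto | apply H2; auto].
        + exists (x :: l'); split; [intros g [<-|Hg]; auto|].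
          intros g [<-|Hg]; simpl; auto. destruct (H2 g Hg); simpl; auto. }
    exists l'; split; auto. apply nd_impI. eapply nd_weaken; eauto.
  - intros [l [Hl Hn]]. exists (a :: l); split.
    + intros g [<-|Hg]; [left | right]; auto.
    + eapply nd_impE; [eapply nd_weaken; eauto with datatypes | apply nd_ax; simpl; auto].
Qed.

Section Lindenbaum.
Variable G0 : fset.
Variable d : form.
Hypothesis HG0 : ~ derives G0 d.

Fixpoint chain (k : nat) : fset :=
  match k with
  | 0 => G0
  | S k =>
      match form_of_code k with
      | Some a =>
          if excluded_middle_informative (derives (extend (chain k) a) d)
          then chain k else extend (chain k) a
      | None => chain k
      end
  end.

Lemma chain_mono k m : k <= m -> forall x, chain k x -> chain m x.
Proof.
  induction 1; auto. intros x Hx; simpl.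
  destruct (form_of_code m); [destruct excluded_middle_informative; [|right]|]; auto.
Qed.

Lemma chain_not_derives k : ~ derives (chain k) d.
Proof.
  induction k; simpl; auto.
  destruct (form_of_code k); auto. destruct excluded_middle_informative; auto.
Qed.

Lemma chain_code a : chain (S (form_code a)) =
  if excluded_middle_informative (derives (extend (chain (form_code a)) a) d)
  then chain (form_code a) else extend (chain (form_code a)) a.
Proof. simpl. rewrite form_of_codeK; reflexivity. Qed.

Definition limit : fset := fun x => exists k, chain k x.

Lemma limit_chain k x : chain k x -> limit x.
Proof. exists k; auto. Qed.

Lemma limit_not_derives : ~ derives limit d.
Proof.
  intros [l [Hl Hn]].
  assert (exists k, forall g, In g l -> chain k g) as [k Hk].
  { clear Hn. induction l as [|x l IH].
    - exists 0; intros ? [].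
    - destruct IH as [k Hk]; [intros; apply Hl; simpl; auto|].
      destruct (Hl x (or_introl eq_refl)) as [k' Hk'].
      exists (k + k'). intros g [<-|Hg]; [apply (chain_mono k') | apply (chain_mono k)]; auto; lia. }
  apply (chain_not_derives k). exists l; auto.
Qed.

Lemma limit_excluded a : ~ limit a -> derives limit (Imp a d).
Proof.
  intros Na. pose proof (chain_code a) as Hk.
  destruct excluded_middle_informative as [H|H].
  - apply derives_extend in H. eapply derives_mono; [|eauto]. intros; eapply limit_chain; eauto.
  - exfalso; apply Na. exists (S (form_code a)). rewrite Hk. left; auto.
Qed.

Lemma limit_closed a : derives limit a -> limit a.
Proof.
  intro Ha. apply NNPP; intro Na. apply limit_not_derives.
  apply (derives_cut limit [Imp a d; a]);
    [intros x [<-|[<-|[]]]; auto using limit_excluded |].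
  eapply nd_impE; apply nd_ax; simpl; auto.
Qed.

Lemma limit_prime a b : limit (Or a b) -> limit a \/ limit b.
Proof.
  intro H. apply NNPP; intro Hn. apply limit_not_derives.
  apply (derives_cut limit [Or a b; Imp a d; Imp b d]).
  - intros x [<-|[<-|[<-|[]]]]; [apply derives_ax; auto | apply limit_excluded; tauto ..].
  - eapply nd_orE; [apply nd_ax; simpl; auto | apply (nd_impE _ a) | apply (nd_impE _ b)];
      apply nd_ax; simpl; auto.
Qed.

End Lindenbaum.

Lemma prime_extension n w c d : prime_filter n w -> in_lang n c -> in_lang n d -> ~ w (Imp c d) ->
  exists v, prime_filter n v /\ subset w v /\ v c /\ ~ v d.
Proof.
  intros Hw Lc Ld Nw.
  assert (H0 : ~ derives (extend w c) d).
  { intro H. apply derives_extend in H. destruct H as [l [Hl Hn]]. apply Nw.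
    apply (pf_closed n w Hw (conj_list l));
      [apply (pf_conj_list n); auto | simpl; auto | apply nd_imp_conj_list; auto]. }
  set (L := limit (extend w c) d).
  assert (Hcl : forall a, derives L a -> L a) by (apply limit_closed; auto).
  assert (Hnd : ~ derives L d) by (apply limit_not_derives; auto).
  assert (Hin : forall a, extend w c a -> L a) by (intros a Ha; exists 0; auto).
  exists (fun x => in_lang n x /\ L x).
  split; [split; [|split; [|split; [|split; [|split]]]] | split; [|split]].
  - tauto.
  - split; [simpl; auto|]. apply Hcl. exists []; split; [intros ? [] | apply nd_top].
  - intros a b [La Ua] Lb Hab. split; auto. apply Hcl. apply (derives_cut _ [a]).
    + intros x [<-|[]]; apply derives_ax; auto.
    + eapply nd_impE; [eapply nd_weaken; eauto; intros ? [] | apply nd_ax; simpl; auto].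
  - intros a b [La Ua] [Lb Ub]. split; [simpl; auto|]. apply Hcl. apply (derives_cut _ [a; b]).
    + intros x [<-|[<-|[]]]; apply derives_ax; auto.
    + apply nd_andI; apply nd_ax; simpl; auto.
  - intros [_ Ub]. apply Hnd. apply (derives_cut _ [Bot]).
    + intros x [<-|[]]; apply derives_ax; auto.
    + apply nd_botE, nd_ax; simpl; auto.
  - intros a b [[La Lb] Uo]. destruct (limit_prime _ _ H0 _ _ Uo); [left | right]; auto.
  - intros a Ha. split; [eapply pf_lang; eauto | apply Hin; right; auto].
  - split; auto. apply Hin; left; auto.
  - intros [_ Ud]. apply Hnd, derives_ax; auto.
Qed.

Lemma finite_upset_anti n x y : finite_upset n x -> subset x y -> finite_upset n y.
Proof.
  intros [l Hl] Hxy. exists l. intros w Hw Hyw. apply Hl; auto. eapply subset_trans; eauto.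
Qed.

Lemma Upt_ext n y z : Upt n y -> subset y z -> subset z y -> Upt n z.
Proof.
  intros [Hp Hf] Hyz Hzy. split; [eapply prime_filter_ext | eapply finite_upset_anti]; eauto.
Qed.

Lemma separated_ext n y z : separated n y -> subset y z -> subset z y -> separated n z.
Proof.
  intros [Hu [i [Hi [Hn Hs]]]] Hyz Hzy. split; [eapply Upt_ext; eauto|].
  exists i; split; [|split]; auto.
  intros w Hw Hzw Hwz. apply Hs; auto; [eapply subset_trans; eauto|].
  intro; apply Hwz; eapply subset_trans; eauto.
Qed.

(** * The universal model *)

Definition Us (n : nat) : kripke :=
  {| world := fset; is_world := separated n; kle := subset; val := fun x i => x (Var i);
     kle_refl := subset_refl; kle_trans := subset_trans;
     val_mono := fun u v i (H : subset u v) => H (Var i) |}.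

Lemma separated_finite_cover n x : separated n x -> exists l, finite_cover (Us n) x l.
Proof.
  intros [[Hp [l Hl]] _]. exists l. intros y Hy Hxy.
  destruct (Hl y (proj1 (proj1 Hy)) Hxy) as [z [Hz [Hyz Hzy]]].
  exists z; split; [|split; [|split; [|split]]]; auto; simpl.
  - exact (separated_ext n y z Hy Hyz Hzy).
  - eapply subset_trans; eauto.
Qed.

Lemma theory_pmorph n : pmorph n (theory (Us n) n).
Proof.
  split; [|split; [|split]].
  - intros x Hx. destruct (separated_finite_cover n x Hx) as [l Hl]. split.
    + apply theory_prime_filter; auto.
    + eapply theory_finite_upset; eauto.
  - intros x y _ _ Hxy. apply theory_mono; auto.
  - intros x i Hx Hi. unfold theory. simpl. tauto.
  - intros x z Hx Hz Hxz. destruct (separated_finite_cover n x Hx) as [l Hl].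
    destruct (theory_back (Us n) n x l Hx Hl z (proj1 Hz) Hxz) as [y [_ [Py [Rxy Hy]]]].
    exists y; auto.
Qed.

Lemma Uim_up n w w' : Uim n w -> Upt n w' -> subset w w' -> Uim n w'.
Proof.
  intros [Hw [f [Hf [y [Hy [H1 H2]]]]]] Hw' Hww'. split; auto. exists f; split; auto.
  destruct Hf as [_ [_ [_ Hback]]].
  destruct (Hback y w' Hy Hw') as [y' [Hy' [_ Hy'w']]]; [eapply subset_trans; eauto|].
  exists y'; auto.
Qed.

Lemma hsem_mono n a x y : subset x y -> hsem n a x -> hsem n a y.
Proof.
  revert x y; induction a; simpl; intros x y Hxy H.
  - apply Hxy; auto.
  - destruct H; split; eauto.
  - intros z Hz Hyz. apply H; auto. eapply subset_trans; eauto.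
Qed.

Lemma in_lang_emb n a : imf_lang n a -> in_lang n (emb a).
Proof. induction a; simpl; tauto. Qed.

(* Truth lemma for [U(n)_{/\,->}]: it is an up-set of the canonical model, so Lindenbaum
   extensions of its points stay in it. *)
Lemma hsem_iff n c : imf_lang n c -> forall w, Uim n w -> (hsem n c w <-> w (emb c)).
Proof.
  induction c as [i | c1 IH1 c2 IH2 | c1 IH1 c2 IH2]; simpl; intros Lc w Hw.
  - tauto.
  - destruct Lc as [L1 L2]. pose proof (proj1 (proj1 Hw)) as Hp.
    rewrite (IH1 L1 w Hw), (IH2 L2 w Hw). split.
    + intros [? ?]; apply (pf_andI n); auto.
    + intros H; split; [eapply (pf_and1 n) | eapply (pf_and2 n)]; eauto.
  - destruct Lc as [L1 L2]. pose proof (proj1 (proj1 Hw)) as Hp. split.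
    + intros H. apply NNPP; intro Hn.
      destruct (prime_extension n w (emb c1) (emb c2) Hp (in_lang_emb _ _ L1)
                  (in_lang_emb _ _ L2) Hn) as [v [Hv [Hwv [Hv1 Hv2]]]].
      assert (Uv : Uim n v).
      { apply (Uim_up n w); auto. split; auto. eapply finite_upset_anti; eauto. apply Hw. }
      apply Hv2, (IH2 L2 v Uv), H, (IH1 L1 v Uv); auto.
    + intros H y Hy Hwy H1. apply (IH2 L2 y Hy). apply (IH1 L1 y Hy) in H1.
      eapply (pf_mp n); eauto. apply (proj1 (proj1 Hy)).
Qed.

(** * Separated points *)
Section Separation.
Variable K : kripke.
Variable n : nat.
Notation forces := (forces K).

Definition strictly_above (x y : world K) : Prop := is_world K y /\ kle K x y /\ ~ kle K y x.

Definition kseparated (x : world K) : Prop :=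
  exists q, q < n /\ ~ val K x q /\ forall y, strictly_above x y -> val K y q.

Lemma kseparated_of_refuted d x : imf_lang n d -> is_world K x -> ~ forces x (emb d) ->
  (forall y, strictly_above x y -> forces y (emb d)) -> kseparated x.
Proof.
  revert x; induction d as [i | d1 IH1 d2 IH2 | d1 IH1 d2 IH2]; simpl;
    intros x Ld Px Nx Hy.
  - exists i; auto.
  - destruct Ld as [L1 L2]. destruct (classic (forces x (emb d1))) as [H1|H1].
    + apply (IH2 x L2 Px); [tauto|]. intros y Sy; apply Hy; auto.
    + apply (IH1 x L1 Px H1). intros y Sy; apply Hy; auto.
  - destruct Ld as [L1 L2]. apply NNPP; intro Ns. apply Nx. intros z Pz Hxz Sz.
    destruct (classic (kle K z x)) as [Hzx|Hzx]; [|apply (Hy z); [split | | apply kle_refl |]; auto].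
    assert (Sx : forces x (emb d1)) by (eapply forces_mono; eauto).
    apply (forces_mono K _ x); auto.
    apply NNPP; intro Nd. apply Ns, (IH2 x L2 Px Nd).
    intros y [Py [Hxy Hyx]]. apply (Hy y); [split; auto | auto | apply kle_refl |].
    eapply forces_mono; eauto.
Qed.

Lemma forces_of_not_kseparated e z : imf_lang n e -> is_world K z -> ~ kseparated z ->
  (forall y, strictly_above z y -> forces y (emb e)) -> forces z (emb e).
Proof.
  revert z; induction e as [i | e1 IH1 e2 IH2 | e1 IH1 e2 IH2]; simpl;
    intros z Le Pz Ns Hy.
  - apply NNPP; intro Nv. apply Ns. exists i; auto.
  - destruct Le as [L1 L2]; split; [apply IH1 | apply IH2]; auto;
      intros y Sy; apply Hy; auto.
  - destruct Le as [L1 L2]. intros w Pw Hzw Sw.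
    destruct (classic (kle K w z)) as [Hwz|Hwz]; [|apply (Hy w); [split | | apply kle_refl |]; auto].
    assert (Sz : forces z (emb e1)) by (eapply forces_mono; eauto).
    apply (forces_mono K _ z); auto. apply IH2; auto.
    intros y [Py [Hzy Hyz]]. apply (Hy y); [split; auto | auto | apply kle_refl |].
    eapply forces_mono; eauto.
Qed.

End Separation.

Definition asbool (Q : Prop) : bool := if excluded_middle_informative Q then true else false.

Lemma asbool_true Q : asbool Q = true <-> Q.
Proof. unfold asbool; destruct excluded_middle_informative; split; auto; discriminate. Qed.

Lemma asbool_false Q : asbool Q = false <-> ~ Q.
Proof. unfold asbool; destruct excluded_middle_informative; split; auto; try discriminate; tauto. Qed.

Lemma filter_length_mono {A} (l : list A) (f g : A -> bool) :
  (forall a, In a l -> f a = true -> g a = true) -> length (filter f l) <= length (filter g l).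
Proof.
  induction l as [|x l IH]; simpl; intros H; auto.
  specialize (IH (fun a Ha => H a (or_intror Ha))).
  specialize (H x (or_introl eq_refl)).
  destruct (f x), (g x); simpl; try lia.
Qed.

Lemma filter_length_lt {A} (l : list A) (f g : A -> bool) :
  (forall a, In a l -> f a = true -> g a = true) ->
  (exists a, In a l /\ f a = false /\ g a = true) ->
  length (filter f l) < length (filter g l).
Proof.
  induction l as [|x l IH]; simpl; intros H [a [Ha [Hf Hg]]]; [destruct Ha|].
  pose proof (filter_length_mono l f g (fun a Ha => H a (or_intror Ha))).
  destruct Ha as [<-|Ha]; [rewrite Hf, Hg; simpl; lia|].
  specialize (IH (fun a Ha => H a (or_intror Ha)) (ex_intro _ a (conj Ha (conj Hf Hg)))).
  specialize (H x (or_introl eq_refl)).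
  destruct (f x), (g x); simpl; try lia.
Qed.

Fixpoint sublists {A} (l : list A) : list (list A) :=
  match l with [] => [[]] | a :: l => map (cons a) (sublists l) ++ sublists l end.

Lemma filter_In_sublists {A} (l : list A) f : In (filter f l) (sublists l).
Proof.
  induction l as [|a l IH]; simpl; auto.
  destruct (f a); apply in_or_app; [left; apply in_map | right]; auto.
Qed.

(** * Finite models of closed theories *)
Definition subformula_closed (n : nat) (S : list imf) : Prop :=
  (forall s, In s S -> imf_lang n s) /\
  (forall a b, In (IAnd a b) S -> In a S /\ In b S) /\
  (forall a b, In (IImp a b) S -> In a S /\ In b S).

Definition closed_in (S X : list imf) : Prop :=
  incl X S /\ forall s, In s S -> nd (map emb X) (emb s) -> In s X.

Definition Mod (S : list imf) : kripke :=
  {| world := list imf; is_world := closed_in S; kle := @incl imf;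
     val := fun X i => In (IVar i) X;
     kle_refl := @incl_refl imf; kle_trans := @incl_tran imf;
     val_mono := fun X Y i (H : incl X Y) => H (IVar i) |}.

Section ClosedTheories.
Variable S : list imf.
Notation closed := (closed_in S).

Lemma nd_map_emb X s : In s X -> nd (map emb X) (emb s).
Proof. intro; apply nd_ax, in_map; auto. Qed.

Definition closure (G : list form) : list imf := filter (fun t => asbool (nd G (emb t))) S.

Lemma in_closure G t : In t (closure G) <-> In t S /\ nd G (emb t).
Proof. unfold closure; rewrite filter_In, asbool_true; tauto. Qed.

Lemma closure_closed G : closed (closure G).
Proof.
  split.
  - intros t Ht; apply in_closure in Ht; tauto.
  - intros s Hs Hn. apply in_closure; split; auto. eapply nd_cut; eauto.
    intros h Hh. apply in_map_iff in Hh as [t [<- Ht]]. apply in_closure in Ht; tauto.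
Qed.

Definition measure (X : list imf) : nat := length (filter (fun s => asbool (In s X)) S).

Lemma measure_lt X Y : closed Y -> incl X Y -> ~ incl Y X -> measure X < measure Y.
Proof.
  intros HY XY NYX. apply filter_length_lt.
  - intros a _. rewrite !asbool_true. auto.
  - assert (exists a, In a Y /\ ~ In a X) as [a [Ha Na]].
    { apply NNPP; intro H. apply NYX; intros a Ha. apply NNPP; intro; apply H; eauto. }
    exists a; rewrite asbool_false, asbool_true. split; auto. apply HY; auto.
Qed.

Lemma closed_ind (Q : list imf -> Prop) :
  (forall X, closed X -> (forall Y, closed Y -> incl X Y -> ~ incl Y X -> Q Y) -> Q X) ->
  forall X, closed X -> Q X.
Proof.
  intros H X. induction X as [X IH] using (induction_ltof1 _ (fun X => length S - measure X)).
  intros HX. apply H; auto. intros Y HY XY NYX. apply IH; auto. unfold ltof.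
  pose proof (measure_lt X Y HY XY NYX).
  assert (measure Y <= length S) by apply filter_length_le. lia.
Qed.

Lemma maximal_extension (Q : list imf -> Prop) X : closed X -> Q X ->
  exists Y, closed Y /\ Q Y /\ incl X Y /\ forall Z, closed Z -> Q Z -> incl Y Z -> incl Z Y.
Proof.
  revert X. apply (closed_ind (fun X => Q X -> exists Y, closed Y /\ Q Y /\ incl X Y /\
    forall Z, closed Z -> Q Z -> incl Y Z -> incl Z Y)).
  intros X HX IH QX.
  destruct (classic (exists Z, closed Z /\ Q Z /\ incl X Z /\ ~ incl Z X))
    as [[Z [HZ [QZ [XZ NZX]]]] | Hn].
  - destruct (IH Z HZ XZ NZX QZ) as [Y [HY [QY [ZY HYm]]]].
    exists Y; split; [|split; [|split]]; auto. eapply incl_tran; eauto.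
  - exists X; split; [|split; [|split]]; auto using incl_refl.
    intros Z HZ QZ XZ. apply NNPP; intro; apply Hn; eauto.
Qed.

Lemma Mod_finite_cover x : closed x -> finite_cover (Mod S) x (sublists S).
Proof.
  intros Hx y Hy xy. set (z := filter (fun s => asbool (In s y)) S).
  assert (zy : incl z y) by (intros s Hs; apply filter_In in Hs as [_ Hs]; apply asbool_true; auto).
  assert (yz : incl y z) by (intros s Hs; apply filter_In; rewrite asbool_true; split; auto; apply Hy; auto).
  exists z; split; [apply filter_In_sublists | split; [|split; [|split]]]; simpl; auto.
  - split; [intros s Hs; apply filter_In in Hs; tauto|].
    intros s Hs Hn. apply yz, Hy; auto. eapply nd_weaken; eauto.
    intros f Hf. apply in_map_iff in Hf as [t [<- Ht]]. apply in_map; auto.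
  - exact (incl_tran xy yz).
Qed.

End ClosedTheories.
Section SubformulaModel.
Variable n : nat.
Variable S : list imf.
Hypothesis HS : subformula_closed n S.
Notation M := (Mod S).
Notation closed := (closed_in S).
Notation forcesM := (forces M).
Notation sepM := (kseparated M n).

Lemma closure_extend X c : closed X -> In c S ->
  let Y := closure S (emb c :: map emb X) in closed Y /\ incl X Y /\ In c Y.
Proof.
  intros HX Hc Y. split; [apply closure_closed | split].
  - intros x Hx. apply in_closure; split; [apply HX; auto|].
    apply nd_ax; right; apply in_map; auto.
  - apply in_closure; split; auto. apply nd_ax; left; auto.
Qed.

Lemma forces_Mod_iff s : In s S -> forall X, closed X -> (forcesM X (emb s) <-> In s X).
Proof.
  destruct HS as [_ [Sand Simp]].
  induction s as [i | s1 IH1 s2 IH2 | s1 IH1 s2 IH2]; simpl; intros Hs X HX.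
  - tauto.
  - destruct (Sand _ _ Hs) as [H1 H2]. rewrite (IH1 H1 X HX), (IH2 H2 X HX). split.
    + intros [? ?]. apply HX; auto. apply nd_andI; apply nd_map_emb; auto.
    + intros H; split; apply HX; auto; [eapply nd_andE1 | eapply nd_andE2];
        apply (nd_map_emb X _ H).
  - destruct (Simp _ _ Hs) as [H1 H2]. split.
    + intros H. apply NNPP; intro Hn.
      destruct (closure_extend X s1 HX H1) as [HY [XY s1Y]].
      set (Y := closure S (emb s1 :: map emb X)) in *.
      assert (s2Y : In s2 Y) by (apply (IH2 H2 Y HY), H, (IH1 H1 Y HY); auto).
      apply in_closure in s2Y as [_ Hd]. apply Hn, HX; auto. apply nd_impI; auto.
    + intros H Y HY XY Hs1. apply (IH2 H2 Y HY). apply (IH1 H1 Y HY) in Hs1.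
      apply HY; auto.
      apply (nd_impE _ (emb s1)); [apply (nd_map_emb Y (IImp s1 s2)) | apply nd_map_emb]; auto.
Qed.

(* A maximal closed theory containing [a] but not [b] is separated. *)
Lemma separated_countermodel a b : In a S -> In b S -> ~ nd [] (Imp (emb a) (emb b)) ->
  exists X, closed X /\ sepM X /\ forcesM X (emb a) /\ ~ forcesM X (emb b).
Proof.
  intros Ha Hb Nab.
  destruct (maximal_extension S (fun X => In a X /\ ~ In b X) (closure S [emb a]))
    as [X [HX [[HaX HbX] [_ Hmax]]]].
  { apply closure_closed. }
  { split; [apply in_closure; split; auto; apply nd_ax; left; auto|].
    intro H; apply in_closure in H as [_ H]; apply Nab, nd_impI; auto. }
  rewrite <- (forces_Mod_iff a Ha X HX), <- (forces_Mod_iff b Hb X HX) in *.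
  exists X; split; [|split]; auto.
  apply (kseparated_of_refuted M n b X (proj1 HS b Hb) HX HbX).
  intros Y [HY [XY NYX]]. rewrite (forces_Mod_iff b Hb Y HY). apply NNPP; intro Nb.
  apply NYX, Hmax; auto. split; auto. apply (forces_Mod_iff a Ha Y HY).
  apply (forces_mono M _ X); auto.
Qed.

Lemma forces_of_kseparated_above e : imf_lang n e -> forall z, closed z ->
  (forall z', closed z' -> sepM z' -> incl z z' -> forcesM z' (emb e)) -> forcesM z (emb e).
Proof.
  intros Le. apply (closed_ind S (fun z => (forall z', closed z' -> sepM z' -> incl z z' ->
    forcesM z' (emb e)) -> forcesM z (emb e))).
  intros z Hz IH H. destruct (classic (sepM z)) as [Hs|Hs].
  - apply H; auto using incl_refl.
  - apply (forces_of_not_kseparated M n e z Le Hz Hs).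
    intros y [Py [zy Nyz]]. apply IH; auto.
    intros z' Pz' Sz' yz'. apply H; auto. exact (incl_tran zy yz').
Qed.

Lemma forces_imp_of_kseparated x c d : imf_lang n d -> closed x ->
  (forall y, closed y -> sepM y -> incl x y -> forcesM y (emb c) -> forcesM y (emb d)) ->
  forcesM x (Imp (emb c) (emb d)).
Proof.
  intros Ld Hx H w Pw xw Sw. apply (forces_of_kseparated_above d Ld w Pw).
  intros z Pz Sz wz. apply H; auto; [exact (incl_tran xw wz) | eapply forces_mono; eauto].
Qed.

Lemma forces_imp_iff x c d : imf_lang n d -> closed x ->
  (forcesM x (Imp (emb c) (emb d)) <->
   (forcesM x (emb c) -> forcesM x (emb d)) /\
   forall y, closed y -> sepM y -> incl x y -> ~ incl y x -> forcesM y (Imp (emb c) (emb d))).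
Proof.
  intros Ld Px. split.
  - intros H; split.
    + apply H; auto.
    + intros y _ _ xy _. eapply forces_mono; eauto.
  - intros [H1 H2]. apply forces_imp_of_kseparated; auto.
    intros y Py Sy xy Hc. destruct (classic (incl y x)) as [yx|yx].
    + apply (forces_mono M _ x); auto. apply H1. eapply forces_mono; eauto.
    + apply (H2 y Py Sy xy yx); auto.
Qed.

Notation thM := (theory M n).

Lemma theory_Mod_Upt x : closed x -> Upt n (thM x).
Proof.
  intros Hx. split; [apply theory_prime_filter; auto|].
  eapply theory_finite_upset; eauto. apply Mod_finite_cover; auto.
Qed.

Lemma theory_Mod_back x v : closed x -> prime_filter n v -> subset (thM x) v ->
  exists y, closed y /\ incl x y /\ subset (thM y) v /\ subset v (thM y).
Proof.
  intros Hx Hv H.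
  destruct (theory_back M n x _ Hx (Mod_finite_cover S x Hx) v Hv H) as [y [_ Hy]].
  exists y; exact Hy.
Qed.

(* The theory map sends separated points to separated points: a strict successor of the
   theory is, by the back condition, the theory of a strict successor. *)
Lemma theory_Mod_separated x : closed x -> sepM x -> separated n (thM x).
Proof.
  intros Hx [q [Hq [Nq Hs]]]. split; [apply theory_Mod_Upt; auto|].
  exists q; split; [|split]; auto.
  - intros [_ H]; apply Nq, H.
  - intros y Hy Hxy Nyx.
    destruct (theory_Mod_back x y Hx (proj1 Hy) Hxy) as [x' [Px' [xx' [H1 H2]]]].
    apply H1. split; [simpl; auto|]. apply Hs. split; [|split]; auto.
    intro x'x. apply Nyx. eapply subset_trans; eauto. apply theory_mono; auto.
Qed.

(* Conversely, a separated point above the theory of [x] is the theory of a separated point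
   above [x]: take a maximal closed theory with the same theory map image. *)
Lemma theory_Mod_back_separated x y : closed x -> separated n y -> subset (thM x) y ->
  exists x', closed x' /\ sepM x' /\ incl x x' /\ subset (thM x') y /\ subset y (thM x').
Proof.
  intros Hx Hy Hxy.
  destruct (theory_Mod_back x y Hx (proj1 (proj1 Hy)) Hxy) as [x'' [P'' [xx'' Hx''y]]].
  destruct (maximal_extension S (fun z => subset (thM z) y /\ subset y (thM z)) x'' P'' Hx''y)
    as [x' [P' [[H3 H4] [x''x' Hmax]]]].
  exists x'; split; [|split; [|split]]; auto; [| eapply incl_tran; eauto].
  destruct Hy as [Uy [q [Hq [Nq Hs]]]]. exists q; split; [|split]; auto.
  - intro V'; apply Nq, H3. split; simpl; auto.
  - intros z [Pz [x'z Nzx']].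
    assert (Hzy : ~ subset (thM z) y).
    { intro zy. apply Nzx', Hmax; auto. split; auto.
      eapply subset_trans; eauto. apply theory_mono; auto. }
    assert (Hz : thM z (Var q)).
    { apply Hs; [apply theory_Mod_Upt; auto | | auto].
      eapply subset_trans; eauto. apply theory_mono; auto. }
    apply Hz.
Qed.

Lemma forces_Us_theory_iff c : imf_lang n c ->
  forall x, closed x -> sepM x -> (forces (Us n) (thM x) (emb c) <-> forcesM x (emb c)).
Proof.
  induction c as [i | c1 IH1 c2 IH2 | c1 IH1 c2 IH2]; simpl; intros Lc x Hx Sx.
  - unfold theory; simpl. tauto.
  - destruct Lc as [L1 L2]. rewrite IH1, IH2; tauto.
  - destruct Lc as [L1 L2]. split.
    + intros H. apply forces_imp_of_kseparated; auto. intros y Py Sy xy Hc.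
      apply (IH2 L2 y Py Sy), H; [apply theory_Mod_separated | apply theory_mono |
        apply (IH1 L1 y Py Sy)]; auto.
    + intros H y Hy xy Hc.
      destruct (theory_Mod_back_separated x y Hx Hy xy) as [x' [P' [S' [xx' [H1 H2]]]]].
      assert (Hc' : forces (Us n) (thM x') (emb c1)) by (eapply forces_mono; eauto).
      apply (IH1 L1 x' P' S'), H, (IH2 L2 x' P' S') in Hc'; auto.
      eapply forces_mono; eauto.
Qed.

End SubformulaModel.

Fixpoint subformulas (a : imf) : list imf :=
  a :: match a with IVar _ => [] | IAnd b c | IImp b c => subformulas b ++ subformulas c end.

Lemma subformulas_self a : In a (subformulas a).
Proof. destruct a; simpl; auto. Qed.

Lemma subformulas_trans a b c : In b (subformulas a) -> In c (subformulas b) ->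
  In c (subformulas a).
Proof.
  revert b; induction a; simpl; intros b [<-|Hb] Hc; auto; try destruct Hb;
    apply in_app_or in Hb as [Hb|Hb]; right; apply in_or_app; eauto.
Qed.

Lemma subformula_closed_subformulas n a : imf_lang n a -> subformula_closed n (subformulas a).
Proof.
  intros La. split; [|split].
  - induction a; simpl; intros s [<-|Hs]; auto; try destruct Hs; destruct La;
      apply in_app_or in Hs as [Hs|Hs]; auto.
  - intros b c Hbc. split; eapply subformulas_trans; eauto; simpl; right; apply in_or_app;
      [left | right]; apply subformulas_self.
  - intros b c Hbc. split; eapply subformulas_trans; eauto; simpl; right; apply in_or_app;
      [left | right]; apply subformulas_self.
Qed.

Lemma subformula_closed_app n S T :
  subformula_closed n S -> subformula_closed n T -> subformula_closed n (S ++ T).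
Proof.
  intros [SL [Sa Si]] [TL [Ta Ti]]. split; [|split].
  - intros s Hs; apply in_app_or in Hs as [Hs|Hs]; auto.
  - intros b c Hs; apply in_app_or in Hs as [Hs|Hs];
      [destruct (Sa _ _ Hs) | destruct (Ta _ _ Hs)]; split; apply in_or_app; auto.
  - intros b c Hs; apply in_app_or in Hs as [Hs|Hs];
      [destruct (Si _ _ Hs) | destruct (Ti _ _ Hs)]; split; apply in_or_app; auto.
Qed.

Lemma separated_countermodel_pair n a b : imf_lang n a -> imf_lang n b ->
  ~ nd [] (Imp (emb a) (emb b)) ->
  exists S X, subformula_closed n S /\ closed_in S X /\ kseparated (Mod S) n X /\
    forces (Mod S) X (emb a) /\ ~ forces (Mod S) X (emb b).
Proof.
  intros La Lb Nab. set (S := subformulas a ++ subformulas b).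
  assert (HS : subformula_closed n S)
    by (apply subformula_closed_app; apply subformula_closed_subformulas; auto).
  destruct (separated_countermodel n S HS a b) as [X HX]; auto;
    [apply in_or_app; left | apply in_or_app; right | ]; auto using subformulas_self.
  exists S, X; auto.
Qed.

Lemma hsem_refutation n a b : imf_lang n a -> imf_lang n b -> ~ nd [] (Imp (emb a) (emb b)) ->
  exists w, Uim n w /\ hsem n a w /\ ~ hsem n b w.
Proof.
  intros La Lb Nab.
  destruct (separated_countermodel_pair n a b La Lb Nab) as [S [X [HS [HX [SX [XA XB]]]]]].
  set (z := theory (Mod S) n X).
  assert (Hz : separated n z) by (apply theory_Mod_separated; auto).
  set (f := theory (Us n) n).
  assert (Uw : Uim n (f z)).
  { split; [apply (proj1 (theory_pmorph n)); auto|].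
    exists f; split; [apply theory_pmorph|]. exists z; split; auto; split; apply subset_refl. }
  exists (f z). rewrite (hsem_iff n a La _ Uw), (hsem_iff n b Lb _ Uw). split; [auto | split].
  - split; [apply in_lang_emb; auto|]. apply (forces_Us_theory_iff n S a La X HX SX); auto.
  - intros [_ H]. apply XB, (forces_Us_theory_iff n S b Lb X HX SX); auto.
Qed.

(** * Local finiteness *)
Inductive tree : Type := node : list bool -> list tree -> tree.

Fixpoint subtrees (t : tree) : list tree :=
  match t with node _ ts => t :: flat_map subtrees ts end.

Definition colour (t : tree) : list bool := match t with node c _ => c end.

(* Formulas are evaluated on a tree as on the Kripke model it describes: [colour] is the
   valuation and the implication quantifies over subtrees. *)
Fixpoint tsat (c : imf) (t : tree) : Prop :=
  match c with
  | IVar i => nth i (colour t) false = true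
  | IAnd a b => tsat a t /\ tsat b t
  | IImp a b => forall s, In s (subtrees t) -> tsat a s -> tsat b s
  end.

Lemma tsat_imp a b c ts : tsat (IImp a b) (node c ts) <->
  (tsat a (node c ts) -> tsat b (node c ts)) /\ forall s, In s ts -> tsat (IImp a b) s.
Proof.
  simpl. split.
  - intros H; split; auto. intros s Hs s' Hs'. apply H; right. apply in_flat_map; eauto.
  - intros [H1 H2] s [<-|Hs]; auto. apply in_flat_map in Hs as [s' [Hs' Hs]]. apply (H2 s'); auto.
Qed.

Fixpoint bool_lists (n : nat) : list (list bool) :=
  match n with
  | 0 => [[]]
  | S n => map (cons true) (bool_lists n) ++ map (cons false) (bool_lists n)
  end.

Lemma In_bool_lists l : In l (bool_lists (length l)).
Proof.
  induction l as [|b l IH]; simpl; auto.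
  apply in_or_app. destruct b; [left | right]; apply in_map; auto.
Qed.

Fixpoint trees_upto (n k : nat) : list tree :=
  match k with
  | 0 => []
  | S k => flat_map (fun c => map (node c) (sublists (trees_upto n k))) (bool_lists n)
  end.

Lemma node_In_trees_upto n k c ts : length c = n -> In ts (sublists (trees_upto n k)) ->
  In (node c ts) (trees_upto n (S k)).
Proof.
  intros Hl Hc. simpl. apply in_flat_map. exists c; split; [rewrite <- Hl; apply In_bool_lists|].
  apply in_map; auto.
Qed.

Section TreeMatch.
Variable n : nat.
Variable S : list imf.
Notation M := (Mod S).
Notation closed := (closed_in S).
Notation forcesM := (forces M).
Notation sepM := (kseparated M n).

(* The number of variables refuted at [x]; it drops strictly above a separated point, which
   bounds the height of the separated part of [M]. *)
Definition refuted_count (x : list imf) : nat :=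
  length (filter (fun i => negb (asbool (In (IVar i) x))) (seq 0 n)).

Lemma refuted_count_le x : refuted_count x <= n.
Proof. unfold refuted_count. rewrite <- (length_seq n 0) at 2. apply filter_length_le. Qed.

Lemma refuted_count_lt x y : sepM x -> incl x y -> ~ incl y x -> closed y ->
  refuted_count y < refuted_count x.
Proof.
  intros [q [Hq [Nq Hs]]] xy Nyx Py. apply filter_length_lt.
  - intros i _. rewrite !Bool.negb_true_iff, !asbool_false. auto.
  - exists q; split; [apply in_seq; lia|].
    rewrite Bool.negb_false_iff, Bool.negb_true_iff, asbool_true, asbool_false.
    split; auto. apply Hs. split; auto.
Qed.

Definition matches (x : list imf) (t : tree) : Prop :=
  forall c, imf_lang n c -> (forcesM x (emb c) <-> tsat c t).

Lemma colour_matches x i : i < n ->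
  nth i (map (fun j => asbool (In (IVar j) x)) (seq 0 n)) false = true <-> In (IVar i) x.
Proof.
  intro Hi. set (f := fun j => asbool (In (IVar j) x)).
  rewrite nth_indep with (d' := f 0) by (rewrite length_map, length_seq; auto).
  rewrite map_nth, seq_nth by auto. apply asbool_true.
Qed.

Lemma matches_node x ts : closed x ->
  (forall y, closed y -> sepM y -> incl x y -> ~ incl y x -> exists s, In s ts /\ matches y s) ->
  (forall s, In s ts -> exists y, closed y /\ sepM y /\ incl x y /\ ~ incl y x /\ matches y s) ->
  matches x (node (map (fun i => asbool (In (IVar i) x)) (seq 0 n)) ts).
Proof.
  intros Px Hdown Hup c. induction c as [i | c1 IH1 c2 IH2 | c1 IH1 c2 IH2]; intros Lc.
  - simpl. rewrite colour_matches; tauto.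
  - destruct Lc as [L1 L2]. simpl. rewrite IH1, IH2; tauto.
  - destruct Lc as [L1 L2].
    change (forcesM x (Imp (emb c1) (emb c2)) <->
      tsat (IImp c1 c2) (node (map (fun i => asbool (In (IVar i) x)) (seq 0 n)) ts)).
    rewrite (forces_imp_iff n S x c1 c2 L2 Px), tsat_imp, IH1, IH2 by auto.
    split; intros [H1 H2]; split; auto.
    + intros s Hs. destruct (Hup s Hs) as [y [Py [Sy [xy [Nyx Hm]]]]].
      apply (Hm (IImp c1 c2) (conj L1 L2)), H2; auto.
    + intros y Py Sy xy Nyx. destruct (Hdown y Py Sy xy Nyx) as [s [Hs Hm]].
      apply (Hm (IImp c1 c2) (conj L1 L2)), H2; auto.
Qed.

Lemma tree_match k x : closed x -> sepM x -> refuted_count x < k ->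
  exists t, In t (trees_upto n k) /\ matches x t.
Proof.
  revert x; induction k as [|k IH]; intros x Px Sx Hk; [lia|].
  set (ts := filter (fun t => asbool (exists y, closed y /\ sepM y /\ incl x y /\ ~ incl y x /\
    matches y t)) (trees_upto n k)).
  exists (node (map (fun i => asbool (In (IVar i) x)) (seq 0 n)) ts). split.
  - apply node_In_trees_upto; [rewrite length_map, length_seq; auto | apply filter_In_sublists].
  - apply matches_node; auto.
    + intros y Py Sy xy Nyx. destruct (IH y Py Sy) as [s [Hs Hm]].
      { pose proof (refuted_count_lt x y Sx xy Nyx Py). lia. }
      exists s; split; auto. apply filter_In; split; auto. apply asbool_true. exists y; auto.
    + intros s Hs. apply filter_In in Hs as [_ Hs]. rewrite asbool_true in Hs; auto.
Qed.

End TreeMatch.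

(* Two formulas with the same truth values on all trees of height at most [n + 1] are
   equivalent, since refuted separated points of finite models have at most [n] levels. *)
Definition profile (n : nat) (a : imf) : list bool :=
  map (fun t => asbool (tsat a t)) (trees_upto n (S n)).

Lemma nd_of_profile_eq n a b : imf_lang n a -> imf_lang n b -> profile n a = profile n b ->
  nd [] (Imp (emb a) (emb b)).
Proof.
  intros La Lb Hp. apply NNPP; intro Nab.
  destruct (separated_countermodel_pair n a b La Lb Nab) as [T [X [_ [HX [SX [XA XB]]]]]].
  destruct (tree_match n T (S n) X HX SX) as [t [Ht Hm]].
  { pose proof (refuted_count_le n X). lia. }
  apply map_ext_in_iff with (a := t) in Hp; auto. cbv beta in Hp.
  apply XB, Hm, asbool_true; auto. rewrite <- Hp. apply asbool_true, Hm; auto.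
Qed.

Definition profile_rep (n : nat) (p : list bool) : list imf :=
  match excluded_middle_informative (exists a, imf_lang n a /\ profile n a = p) with
  | left H => [proj1_sig (constructive_indefinite_description _ H)]
  | right _ => []
  end.

Lemma profile_rep_spec n p b : In b (profile_rep n p) -> imf_lang n b /\ profile n b = p.
Proof.
  unfold profile_rep. destruct excluded_middle_informative as [H|H]; [|intros []].
  destruct constructive_indefinite_description as [c Hc]. intros [<-|[]]; auto.
Qed.

Lemma profile_rep_nonempty n a : imf_lang n a -> exists b, In b (profile_rep n (profile n a)).
Proof.
  intros La. unfold profile_rep. destruct excluded_middle_informative as [H|H]; [|exfalso; eauto].
  eexists; left; reflexivity.
Qed.

Lemma imf_finite n : exists l : list imf, (forall a, In a l -> imf_lang n a) /\
  forall a, imf_lang n a -> exists b, In b l /\ ipc_equiv (emb a) (emb b).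
Proof.
  exists (flat_map (profile_rep n) (bool_lists (length (trees_upto n (S n))))). split.
  - intros a Ha. apply in_flat_map in Ha as [p [_ Hp]]. apply (profile_rep_spec n p); auto.
  - intros a La. destruct (profile_rep_nonempty n a La) as [b Hb].
    destruct (profile_rep_spec n _ b Hb) as [Lb Pb]. exists b. split.
    + apply in_flat_map. exists (profile n a); split; auto.
      unfold profile. rewrite <- (length_map (fun t => asbool (tsat a t))). apply In_bool_lists.
    + split; apply (nd_of_profile_eq n); auto; congruence.
Qed.

(** * Soundness for implicative meet-semilattices *)
Section ImpSLSoundness.
Variable A : ImpSL.
Variable g : nat -> car A.
Notation m := (meet A).
Notation im := (imp A).

Definition sle (x y : car A) : Prop := m x y = x.

Lemma sle_refl x : sle x x.
Proof. apply meetI. Qed.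

Lemma sle_trans x y z : sle x y -> sle y z -> sle x z.
Proof. unfold sle; intros H1 H2. rewrite <- H1, <- meetA, H2; auto. Qed.

Lemma sle_meetl x y : sle (m x y) x.
Proof. unfold sle. rewrite (meetC A x y), <- meetA, meetI; auto. Qed.

Lemma sle_meetr x y : sle (m x y) y.
Proof. unfold sle. rewrite <- meetA, meetI; auto. Qed.

Lemma sle_meet x y z : sle x y -> sle x z -> sle x (m y z).
Proof. unfold sle; intros H1 H2. rewrite meetA, H1, H2; auto. Qed.

Lemma sle_antisym x y : sle x y -> sle y x -> x = y.
Proof. unfold sle; intros H1 H2. rewrite <- H1. rewrite <- H2 at 2. apply meetC. Qed.

Lemma sle_mp x y : sle (m (im x y) x) y.
Proof. apply resid, meetI. Qed.

Lemma sle_resid f c d : sle (m f c) d -> sle f (im c d).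
Proof. apply resid. Qed.

Lemma sle_meet2 a a' b b' : sle a a' -> sle b b' -> sle (m a b) (m a' b').
Proof.
  intros H1 H2. apply sle_meet; [eapply sle_trans; [apply sle_meetl | auto] |
    eapply sle_trans; [apply sle_meetr | auto]].
Qed.

Definition is_filter (F : car A -> Prop) : Prop :=
  (exists x, F x) /\ (forall x y, F x -> sle x y -> F y) /\ (forall x y, F x -> F y -> F (m x y)).

Definition filter_model : kripke :=
  {| world := car A -> Prop; is_world := is_filter;
     kle := fun F G => forall x, F x -> G x; val := fun F i => F (g i);
     kle_refl := fun F x H => H;
     kle_trans := fun F G H FG GH x Hx => GH x (FG x Hx);
     val_mono := fun F G i FG => FG (g i) |}.

Definition filter_extend (F : car A -> Prop) (c : car A) : car A -> Prop :=
  fun y => exists f, F f /\ sle (m f c) y.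

Lemma filter_extend_spec F c : is_filter F ->
  is_filter (filter_extend F c) /\ (forall x, F x -> filter_extend F c x) /\
  filter_extend F c c.
Proof.
  intros [[x0 Hx0] [Hu Hm]]. split; [split; [|split] | split].
  - exists c, x0; split; auto. apply sle_meetr.
  - intros x y [f [Hf Hl]] Hxy. exists f; split; auto. eapply sle_trans; eauto.
  - intros x y [f1 [H1 L1]] [f2 [H2 L2]]. exists (m f1 f2); split; auto.
    apply sle_meet; [eapply sle_trans; [|apply L1] | eapply sle_trans; [|apply L2]];
      apply sle_meet2; auto using sle_refl, sle_meetl, sle_meetr.
  - intros x Hx. exists x; split; auto. apply sle_meetl.
  - exists x0; split; auto. apply sle_meetr.
Qed.

Lemma forces_filter_iff c : forall F, is_filter F -> (forces filter_model F (emb c) <-> F (eval A g c)).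
Proof.
  induction c as [i | c1 IH1 c2 IH2 | c1 IH1 c2 IH2]; simpl; intros F HF.
  - tauto.
  - rewrite IH1, IH2 by auto. destruct HF as [_ [Hu Hm]]. split.
    + intros [? ?]; auto.
    + intros H; split; eapply Hu; eauto; [apply sle_meetl | apply sle_meetr].
  - split.
    + intros H. destruct (filter_extend_spec F (eval A g c1) HF) as [HG [FG Hc]].
      apply (IH1 _ HG), H, (IH2 _ HG) in Hc; auto.
      destruct Hc as [f [Hf Hl]]. eapply (proj1 (proj2 HF)); eauto. apply sle_resid; auto.
    + intros H G HG FG Hc. apply (IH1 G HG) in Hc. apply (IH2 G HG).
      destruct HG as [_ [Hu Hm]]. eapply Hu; [apply Hm; [apply FG; eauto | eauto] | apply sle_mp].
Qed.

Lemma eval_sle_of_nd a b : nd [] (Imp (emb a) (emb b)) -> sle (eval A g a) (eval A g b).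
Proof.
  intro H. set (F := sle (eval A g a)).
  assert (HF : is_filter F).
  { split; [|split]; [exists (eval A g a); apply sle_refl | | intros; apply sle_meet; auto].
    intros x y H1 H2; eapply sle_trans; eauto. }
  apply (forces_filter_iff b F HF). eapply forces_nd_imp; eauto.
  apply (forces_filter_iff a F HF). apply sle_refl.
Qed.

Lemma eval_ipc_equiv a b : ipc_equiv (emb a) (emb b) -> eval A g a = eval A g b.
Proof. intros [H1 H2]. apply sle_antisym; apply eval_sle_of_nd; auto. Qed.

End ImpSLSoundness.

Lemma h_upclosed n a x y : h n a x -> Uim n y -> subset x y -> h n a y.
Proof. intros [_ Hx] Hy Hxy. split; auto. eapply hsem_mono; eauto. Qed.

Lemma h_incl_iff n a b : imf_lang n a -> imf_lang n b ->
  (forall x, h n a x -> h n b x) <-> nd [] (Imp (emb a) (emb b)).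
Proof.
  intros La Lb. split.
  - intros H. apply NNPP; intro Hn.
    destruct (hsem_refutation n a b La Lb Hn) as [w [Uw [Ha Hb]]].
    apply Hb, (H w). split; auto.
  - intros Hab x [Ux Hx]. split; auto.
    apply (hsem_iff n b Lb x Ux). apply (hsem_iff n a La x Ux) in Hx.
    eapply (pf_closed n x (proj1 (proj1 Ux))); eauto. apply in_lang_emb; auto.
Qed.

Theorem theorem3p13 (n : nat) :
  (forall a x y, h n a x -> Uim n y -> subset x y -> h n a y) /\
  (forall a b, imf_lang n a -> imf_lang n b ->
     ((forall x, h n a x <-> h n b x) <-> ipc_equiv (emb a) (emb b))) /\
  (exists l : list imf, (forall a, In a l -> imf_lang n a) /\
     forall a, imf_lang n a -> exists b, In b l /\ ipc_equiv (emb a) (emb b)) /\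
  (forall (A : ImpSL) (g : nat -> car A),
     exists l : list (car A), forall a, imf_lang n a -> In (eval A g a) l).
Proof.
  split; [exact (h_upclosed n) | split; [|split]].
  - intros a b La Lb. unfold ipc_equiv.
    rewrite <- (h_incl_iff n a b La Lb), <- (h_incl_iff n b a Lb La).
    split; [intros H; split; intro x; apply H | intros [H1 H2] x; split; auto].
  - apply imf_finite.
  - intros A g. destruct (imf_finite n) as [l [_ Hl]]. exists (map (eval A g) l).
    intros a La. destruct (Hl a La) as [b [Hb He]].
    rewrite (eval_ipc_equiv A g a b He). apply in_map; auto.
Qed.
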